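(* Let $(A,\cdot,[-,-])$ be a transposed Poisson algebra and $(\mu,\rho,V)$ a representation of it. Then $(-\mu^*,\rho^*,V^* )$ is a representation of $(A,\cdot,[-,-])$ if and only if $\mu([x,y])=0$ and $\rho(x\cdot y)=\mu(x)\rho(y)$ for all $x,y\in A$. In particular, $(-\mathcal{L}^*_{\cdot},\mathrm{ad}^*,A^* )$ is a representation of $(A,\cdot,[-,-])$ if and only if $[x,y\cdot z]=x\cdot[y,z]=0$ for all $x,y,z\in A$.
   Context: Finite-dimensional spaces, characteristic zero. $\mathcal{L}_\cdot(x)y=x\cdot y$, $\mathrm{ad}(x)y=[x,y]$. For linear $\rho:A\to\mathrm{End}(V)$, $\rho^*:A\to\mathrm{End}(V^* )$ is $\langle\rho^*(x)v^*,u\rangle=-\langle v^*,\rho(x)u\rangle$. Transposed Poisson algebra: $(A,\cdot)$ commutative associative, $(A,[-,-])$ Lie, $2z\cdot[x,y]=[z\cdot x,y]+[x,z\cdot y]$. A representation of a transposed Poisson algebra is $(\mu,\rho,V)$ with $\mu,\rho:A\to\mathrm{End}(V)$ linear, $\mu(x\cdot y)=\mu(x)\mu(y)$, $\rho([x,y])=\rho(x)\rho(y)-\rho(y)\rho(x)$, $2\mu(x)\rho(y)=\rho(x\cdot y)+\rho(y)\mu(x)$ and $2\mu([x,y])=\rho(x)\mu(y)-\rho(y)\mu(x)$ for all $x,y$. *)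

From HB Require Import structures.
From mathcomp Require Import all_boot all_order all_algebra.
Set Implicit Arguments.
Unset Strict Implicit.
Unset Printing Implicit Defensive.
Import GRing.Theory.
Local Open Scope ring_scope.

(* Finite-dimensional vector spaces over K are vectType K; End(V) = 'End(V);
   the dual space V^* is 'Hom(V, K^o) (linear forms on V). *)

Section TPA.
Variable K : fieldType.

Definition is_TPA (A : vectType K) (mul br : A -> A -> A) : Prop :=
  (forall x, linear (mul x)) /\ (forall y, linear (mul^~ y)) /\
  (forall x, linear (br x)) /\ (forall y, linear (br^~ y)) /\
      (forall x y, mul x y = mul y x) /\
      (forall x y z, mul (mul x y) z = mul x (mul y z)) /\
      (forall x, br x x = 0) /\
      (forall x y z, br x (br y z) + br y (br z x) + br z (br x y) = 0) /\
      (forall x y z, 2%:R *: mul z (br x y) = br (mul z x) y + br x (mul z y)).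

Definition is_TPA_rep (A V : vectType K) (mul br : A -> A -> A)
    (mu rho : A -> 'End(V)) : Prop :=
  linear mu /\ linear rho /\
      (forall x y, mu (mul x y) = (mu x \o mu y)%VF) /\
      (forall x y, rho (br x y) = (rho x \o rho y)%VF - (rho y \o rho x)%VF) /\
      (forall x y, 2%:R *: (mu x \o rho y)%VF = rho (mul x y) + (rho y \o mu x)%VF) /\
      (forall x y, 2%:R *: mu (br x y) = (rho x \o mu y)%VF - (rho y \o mu x)%VF).

(* dual endomorphism: <f^* v*, u> = - <v*, f u>, i.e. f^* v* = - (v* o f) *)
Definition dualEnd (V : vectType K) (f : 'End(V)) : 'End('Hom(V, K^o)) :=
  linfun (fun phi : 'Hom(V, K^o) => - (phi \o f)%VF).

Definition dualRep (A V : vectType K) (rho : A -> 'End(V)) :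
  A -> 'End('Hom(V, K^o)) := fun x => dualEnd (rho x).

Definition Lmul (A : vectType K) (mul : A -> A -> A) (x : A) : 'End(A) :=
  linfun (mul x).
Definition adj (A : vectType K) (br : A -> A -> A) (x : A) : 'End(A) :=
  linfun (br x).
End TPA.

From HB Require Import structures.
From mathcomp Require Import all_boot all_order all_algebra.
Set Implicit Arguments.
Unset Strict Implicit.
Unset Printing Implicit Defensive.
Import GRing.Theory.
Local Open Scope ring_scope.

(* Dualizing is injective and reverses composition up to sign,
   (f g)^* = - g^* f^* .  Hence for the pair -mu^*, rho^* the multiplicativity
   and Lie axioms are automatic (the product is commutative), while the two
   compatibility axioms become those of (mu, rho) with every composite
   reversed.  Comparing the two versions gives 3 (mu x rho y - rho y mu x) = 0
   and 4 mu [x, y] = 0, and in characteristic zero these are exactly the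
   stated conditions.  For the adjoint representation the conditions read
   [x, y] z = 0 and [x y, z] = x [y, z]. *)

Section LinearFunctions.
Variable K : fieldType.

Section PlainLinear.
Variables (U W : lmodType K) (f : U -> W) (fL : linear f).
Let fLin : {linear U -> W} := HB.pack f (GRing.isLinear.Build K U W *:%R f fL).

Lemma linear_funD : {morph f : u v / u + v}.
Proof. exact: (raddfD fLin). Qed.

Lemma linear_funN : {morph f : u / - u}.
Proof. exact: (raddfN fLin). Qed.

End PlainLinear.

Lemma linfunE_linear (U W : vectType K) (f : U -> W) (fL : linear f) u :
  linfun f u = f u.
Proof. exact: (lfunE (HB.pack f (GRing.isLinear.Build K U W *:%R f fL)) u). Qed.

Lemma lfun_separates (V : vectType K) (v : V) :
  (forall phi : 'Hom(V, K^o), phi v = 0) -> v = 0.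
Proof.
move=> phi_v0; rewrite (coord_vbasis (memvf v)); apply: big1 => i _.
pose c := linfun (fun u : V => (coord (vbasis fullv) i u : K^o)).
have -> : coord (vbasis fullv) i v = c v.
  by rewrite linfunE_linear // => a u w; rewrite linearP.
by rewrite phi_v0 scale0r.
Qed.

End LinearFunctions.

Section DualEndomorphism.
Variables (K : fieldType) (V : vectType K).
Implicit Types (f g : 'End(V)) (phi : 'Hom(V, K^o)).
Local Notation dual := (@dualEnd K V).

Lemma dualEndE f phi : dual f phi = - (phi \o f)%VF.
Proof.
rewrite linfunE_linear // => a p q.
by rewrite comp_lfunDl -comp_lfunZl opprD scalerN.
Qed.

Lemma dualEnd_comp f g : (dual f \o dual g)%VF = - dual (g \o f)%VF.
Proof.
apply/lfunP => phi; rewrite comp_lfunE opp_lfunE !dualEndE.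
by rewrite comp_lfunNl !opprK comp_lfunA.
Qed.

Lemma dualEndD f g : dual (f + g) = dual f + dual g.
Proof. by apply/lfunP => phi; rewrite add_lfunE !dualEndE comp_lfunDr opprD. Qed.

Lemma dualEndZ a f : dual (a *: f) = a *: dual f.
Proof.
by apply/lfunP => phi; rewrite scale_lfunE !dualEndE -comp_lfunZr scalerN.
Qed.

Lemma dualEndN f : dual (- f) = - dual f.
Proof. by apply/lfunP => phi; rewrite opp_lfunE !dualEndE comp_lfunNr. Qed.

Lemma dualEndB f g : dual (f - g) = dual f - dual g.
Proof. by rewrite dualEndD dualEndN. Qed.

Lemma dualEnd_inj : injective (@dualEnd K V).
Proof.
move=> f g eq_fg; apply/lfunP => v; apply/eqP; rewrite -subr_eq0; apply/eqP.
apply: lfun_separates => phi.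
have := congr1 (fun F => fun_of_lfun F phi) eq_fg.
rewrite /= !dualEndE => /oppr_inj/lfunP/(_ v).
by rewrite !comp_lfunE raddfB => /= ->; rewrite subrr.
Qed.

End DualEndomorphism.

Section DualRepresentation.
Variables (K : fieldType) (A V : vectType K) (mul br : A -> A -> A).
Variables (mu rho : A -> 'End(V)).
Hypothesis mulC : forall x y, mul x y = mul y x.
Hypothesis rep : is_TPA_rep mul br mu rho.

Lemma dual_rep_iff_reversed :
  is_TPA_rep mul br (fun x => - dualRep mu x) (dualRep rho) <->
  (forall x y, 2%:R *: (rho y \o mu x)%VF = rho (mul x y) + (mu x \o rho y)%VF) /\
  (forall x y, - (2%:R *: mu (br x y)) = (mu y \o rho x)%VF - (mu x \o rho y)%VF).
Proof.
have [linmu [linrho [mu_mul [rho_br _]]]] := rep.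
rewrite /dualRep.
have compat_mul x y :
    2%:R *: ((- dualEnd (mu x)) \o dualEnd (rho y))%VF =
      dualEnd (rho (mul x y)) + (dualEnd (rho y) \o - dualEnd (mu x))%VF <->
    2%:R *: (rho y \o mu x)%VF = rho (mul x y) + (mu x \o rho y)%VF.
  rewrite comp_lfunNl comp_lfunNr !dualEnd_comp !opprK -dualEndZ -dualEndD.
  by split=> [/dualEnd_inj | ->].
have compat_br x y :
    2%:R *: - dualEnd (mu (br x y)) =
      (dualEnd (rho x) \o - dualEnd (mu y))%VF -
      (dualEnd (rho y) \o - dualEnd (mu x))%VF <->
    - (2%:R *: mu (br x y)) = (mu y \o rho x)%VF - (mu x \o rho y)%VF.
  rewrite !comp_lfunNr !dualEnd_comp !opprK scalerN -dualEndZ -dualEndB -dualEndN.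
  by split=> [/dualEnd_inj | ->].
split=> [[_ [_ [_ [_ [dual_mul dual_br]]]]] | [rev_mul rev_br]].
  by split=> x y; [apply/compat_mul | apply/compat_br].
split; [|split; [|split; [|split; [|split]]]].
- by move=> a x y; rewrite linmu dualEndD dualEndZ opprD scalerN.
- by move=> a x y; rewrite linrho dualEndD dualEndZ.
- move=> x y; rewrite comp_lfunNl comp_lfunNr opprK dualEnd_comp.
  by rewrite -mu_mul mulC.
- by move=> x y; rewrite !dualEnd_comp rho_br dualEndB opprK addrC.
- by move=> x y; apply/compat_mul.
- by move=> x y; apply/compat_br.
Qed.

Hypothesis charK0 : [pchar K] =i pred0.

Lemma scaler_natr_inj (W : lmodType K) n (v w : W) :
  (0 < n)%N -> n%:R *: v = n%:R *: w -> v = w.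
Proof.
move=> n_gt0 /(congr1 (fun u => (n%:R : K)^-1 *: u)).
have n_neq0 : (n%:R : K) != 0 by rewrite (pcharf0P K).1 // -lt0n.
by rewrite !scalerA mulVf // !scale1r.
Qed.

Lemma reversed_compat_iff :
  (forall x y, 2%:R *: (rho y \o mu x)%VF = rho (mul x y) + (mu x \o rho y)%VF) /\
  (forall x y, - (2%:R *: mu (br x y)) = (mu y \o rho x)%VF - (mu x \o rho y)%VF) <->
  (forall x y, mu (br x y) = 0) /\
  (forall x y, rho (mul x y) = (mu x \o rho y)%VF).
Proof.
have [_ [_ [_ [_ [compat_mul compat_br]]]]] := rep.
have scale3 (a b c : 'End(V)) : a + a = c + b -> b + b = c + a -> a = b.
  move=> eq_a eq_b; apply: (@scaler_natr_inj _ 3) => //.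
  rewrite !scaler_nat !mulrSr !mulr0n !add0r eq_a eq_b.
  by rewrite -!addrA (addrC b).
split=> [[rev_mul rev_br] | [mu_br0 rho_mul]].
  have commute x y : (mu x \o rho y)%VF = (rho y \o mu x)%VF.
    have := compat_mul x y; have := rev_mul x y.
    rewrite !scaler_nat !mulr2n => eq_b eq_a.
    exact: scale3 eq_a eq_b.
  split=> x y.
    have antisym : - (2%:R *: mu (br x y)) = 2%:R *: mu (br x y).
      by rewrite rev_br !commute compat_br.
    apply: (@scaler_natr_inj _ 4) => //.
    by rewrite scaler0 (natrD K 2 2) scalerDl -{1}antisym addNr.
  by apply: (addIr (rho y \o mu x)%VF);
    rewrite -commute -mulr2n -scaler_nat compat_mul commute.
have commute x y : (mu x \o rho y)%VF = (rho y \o mu x)%VF.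
  by apply: (addrI (mu x \o rho y)%VF);
    rewrite -mulr2n -scaler_nat compat_mul rho_mul.
split=> x y.
  by rewrite -commute rho_mul scaler_nat mulr2n.
rewrite mu_br0 scaler0 oppr0 (commute x y) (commute y x) -compat_br.
by rewrite mu_br0 scaler0.
Qed.

Lemma dual_rep_iff :
  is_TPA_rep mul br (fun x => - dualRep mu x) (dualRep rho) <->
  (forall x y, mu (br x y) = 0) /\
  (forall x y, rho (mul x y) = (mu x \o rho y)%VF).
Proof. exact: iff_trans dual_rep_iff_reversed reversed_compat_iff. Qed.

End DualRepresentation.

Section AdjointRepresentation.
Variables (K : fieldType) (A : vectType K) (mul br : A -> A -> A).
Hypothesis tpa : is_TPA mul br.

Lemma LmulE x z : Lmul mul x z = mul x z.
Proof.
by have [lin_mul_right _] := tpa; rewrite (linfunE_linear (lin_mul_right x)).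
Qed.

Lemma adjE x z : adj br x z = br x z.
Proof.
by have [_ [_ [lin_br_right _]]] := tpa; rewrite (linfunE_linear (lin_br_right x)).
Qed.

Lemma br_skew x y : br x y = - br y x.
Proof.
have [_ [_ [lin_br_right [lin_br_left [_ [_ [br_xx _]]]]]]] := tpa.
have := br_xx (x + y).
rewrite (linear_funD (lin_br_left _)) !(linear_funD (lin_br_right _)).
rewrite !br_xx add0r addr0.
by move/eqP; rewrite addr_eq0 => /eqP.
Qed.

Lemma adjoint_is_TPA_rep : is_TPA_rep mul br (Lmul mul) (adj br).
Proof.
have [_ [lin_mul_left [lin_br_right [lin_br_left tpa_axioms]]]] := tpa.
have [mulC [mulA [_ [jacobi compat]]]] := tpa_axioms.
split; [|split; [|split; [|split; [|split]]]].
- move=> a u v; apply/lfunP => z.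
  by rewrite add_lfunE scale_lfunE !LmulE lin_mul_left.
- move=> a u v; apply/lfunP => z.
  by rewrite add_lfunE scale_lfunE !adjE lin_br_left.
- by move=> x y; apply/lfunP => z; rewrite comp_lfunE !LmulE mulA.
- move=> x y; apply/lfunP => z.
  rewrite add_lfunE opp_lfunE !comp_lfunE !adjE.
  rewrite [br (br x y) z]br_skew [br x z]br_skew.
  rewrite (linear_funN (lin_br_right y)) opprK.
  by apply/eqP; rewrite eq_sym -subr_eq0 opprK jacobi.
- move=> x y; apply/lfunP => z.
  by rewrite add_lfunE scale_lfunE !comp_lfunE !LmulE !adjE compat.
- move=> x y; apply/lfunP => z.
  rewrite add_lfunE opp_lfunE scale_lfunE !comp_lfunE !LmulE !adjE.
  rewrite (mulC (br x y) z) compat (mulC y z) [br y (mul x z)]br_skew opprK.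
  by rewrite (mulC x z) addrC.
Qed.

Lemma adjoint_conditions_iff :
  (forall x y, Lmul mul (br x y) = 0) /\
  (forall x y, adj br (mul x y) = (Lmul mul x \o adj br y)%VF) <->
  (forall x y z, br x (mul y z) = 0 /\ mul x (br y z) = 0).
Proof.
have [_ [_ [_ [_ [mulC _]]]]] := tpa.
split=> [[Lmul_br0 adj_mul] x y z | annihilate].
  have mul_br0 u v w : mul (br u v) w = 0.
    by rewrite -LmulE Lmul_br0 zero_lfunE.
  have br_mul u v w : br (mul u v) w = mul u (br v w).
    by rewrite -adjE adj_mul comp_lfunE adjE LmulE.
  by rewrite br_skew br_mul !(mulC _ (br _ _)) !mul_br0 oppr0.
split=> x y; apply/lfunP => z.
  by rewrite LmulE zero_lfunE mulC (annihilate z x y).2.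
rewrite comp_lfunE !adjE LmulE br_skew.
by rewrite (annihilate z x y).1 (annihilate x y z).2 oppr0.
Qed.

End AdjointRepresentation.

Theorem mainTheorem16 (K : fieldType) (charK0 : [pchar K] =i pred0)
  (A V : vectType K) (mul br : A -> A -> A) (HA : is_TPA mul br)
  (mu rho : A -> 'End(V)) (Hrep : is_TPA_rep mul br mu rho) :
  (is_TPA_rep mul br (fun x => - dualRep mu x) (dualRep rho) <->
     (forall x y, mu (br x y) = 0) /\
     (forall x y, rho (mul x y) = (mu x \o rho y)%VF)) /\
  (is_TPA_rep mul br (fun x => - dualRep (Lmul mul) x) (dualRep (adj br)) <->
     (forall x y z, br x (mul y z) = 0 /\ mul x (br y z) = 0)).
Proof.
have [_ [_ [_ [_ [mulC _]]]]] := HA.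
split; first exact: dual_rep_iff.
apply: (iff_trans _ (adjoint_conditions_iff HA)).
exact: (dual_rep_iff mulC (adjoint_is_TPA_rep HA)).
Qed.
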